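(* Let $K\ge1$ be an integer, $n\ge0$, let $P_n(x,y),Q_n(x,y)$ be real polynomials of degree $n$, and let $\mathrm{a}_1,\ldots,\mathrm{a}_K$ be pairwise distinct nonzero real numbers. For $0<r<\min_j|\mathrm{a}_j|$ let $\gamma_r=\{(x,y):x^2+y^2=r^2\}$ and \[ I(r)=\int_{\gamma_r}\frac{Q_n(x,y)\,dx-P_n(x,y)\,dy}{\prod_{j=1}^K(x-\mathrm{a}_j)}. \] Let $\widetilde K=\operatorname{card}\{|\mathrm{a}_1|,\ldots,|\mathrm{a}_K|\}$ and let $\widetilde{\mathrm{a}}_1,\ldots,\widetilde{\mathrm{a}}_{\widetilde K}$ be the distinct values of $\{|\mathrm{a}_1|,\ldots,|\mathrm{a}_K|\}$. Then there exist real polynomials $S^j(\rho)$, $j=1,\ldots,\widetilde K$, of degree at most $[(n-1)/2]+1$ and a real polynomial $T(\rho)$ of degree at most $[n/2]$ such that for all $0<r<\min_j|\mathrm{a}_j|$, \[ I(r)=\sum_{j=1}^{\widetilde K}\frac{S^j(r^2)}{\sqrt{\widetilde{\mathrm{a}}_j^2-r^2}}+T(r^2). \]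
   Context: $[s]$ denotes the integer part of $s$. The circle $\gamma_r$ is parametrized by $(r\cos\theta,r\sin\theta)$, $\theta\in[0,2\pi]$. *)

From Stdlib Require Import Reals List.
From Coquelicot Require Import Coquelicot.
Open Scope R_scope.

Fixpoint sumR (n : nat) (f : nat -> R) : R :=
  match n with O => 0 | S m => sumR m f + f m end.

Fixpoint prodR (l : list R) (f : R -> R) : R :=
  match l with nil => 1 | cons a l' => f a * prodR l' f end.

(* Real bivariate polynomial of total degree at most n, with coefficients c i j
   (monomial x^i y^j, i + j <= n). *)
Definition poly2_eval (n : nat) (c : nat -> nat -> R) (x y : R) : R :=
  sumR (S n) (fun i => sumR (S (n - i)) (fun j => c i j * x ^ i * y ^ j)).

Definition poly_eval (d : nat) (c : nat -> R) (t : R) : R :=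
  sumR (S d) (fun k => c k * t ^ k).

(* I(r) = \int_{gamma_r} (Q dx - P dy) / prod_j (x - a_j),
   gamma_r parametrized by (r cos th, r sin th), th in [0, 2 pi]. *)
Definition I_line (n : nat) (P Q : nat -> nat -> R) (a : list R) (r : R) : R :=
  RInt (fun th =>
          let x := r * cos th in let y := r * sin th in
          (poly2_eval n Q x y * (- r * sin th) - poly2_eval n P x y * (r * cos th))
          / prodR a (fun aj => x - aj))
       0 (2 * PI).

Definition abs_values (a : list R) : list R := nodup Req_EM_T (map Rabs a).

From Stdlib Require Import Reals List Lia Lra.
From Coquelicot Require Import Coquelicot.
Open Scope R_scope.

(* Expanding [Q dx - P dy] writes I(r) as a combination of the moments
   M(u,v)(r) = ∫_{γ_r} x^u y^v / ∏_j (x - a_j) with u + v <= n + 1.  Moments with v odd vanish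
   by the symmetry θ ↦ 2π - θ, and y^2 = r^2 - x^2 gives M(u,v+2) = r^2 M(u,v) - M(u+2,v),
   which reduces everything to v = 0.  There, partial fractions split x^u / ∏_j (x - a_j) into
   a polynomial of degree < u, whose integral over γ_r is a polynomial in r^2, and simple
   fractions β_j / (x - a_j), whose integrals are ∓2π / sqrt(a_j^2 - r^2).  Counting
   coefficients through the recursion gives the degree bounds. *)

Lemma sumR_ext n f g : (forall k, (k < n)%nat -> f k = g k) -> sumR n f = sumR n g.
Proof.
  induction n as [|n IH]; intros Hfg; simpl; [reflexivity|].
  rewrite IH, Hfg by (lia || (intros; apply Hfg; lia)). reflexivity.
Qed.

Lemma sumR_0 n : sumR n (fun _ => 0) = 0.
Proof. induction n as [|n IH]; simpl; [|rewrite IH]; ring. Qed.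

Lemma sumR_plus n f g : sumR n (fun k => f k + g k) = sumR n f + sumR n g.
Proof. induction n as [|n IH]; simpl; [|rewrite IH]; ring. Qed.

Lemma sumR_mult_l n c f : c * sumR n f = sumR n (fun k => c * f k).
Proof. induction n as [|n IH]; simpl; [|rewrite <- IH]; ring. Qed.

Lemma sumR_div_r n f d : sumR n f / d = sumR n (fun k => f k / d).
Proof. unfold Rdiv. rewrite Rmult_comm, sumR_mult_l. apply sumR_ext. intros; ring. Qed.

Lemma sumR_sub_mul n f g c d e :
  (sumR n f * c - sumR n g * d) * e = sumR n (fun k => (f k * c - g k * d) * e).
Proof. induction n as [|n IH]; simpl; [|rewrite <- IH]; ring. Qed.

Lemma sumR_succ_l n f : sumR (S n) f = f O + sumR n (fun k => f (S k)).
Proof. induction n as [|n IH]; simpl in *; [|rewrite IH]; ring. Qed.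

Lemma sumR_zero_tail m n f : (m <= n)%nat -> (forall k, (m <= k < n)%nat -> f k = 0) ->
  sumR n f = sumR m f.
Proof.
  induction n as [|n IH]; intros Hmn Hf; [now replace m with O by lia|].
  destruct (Nat.eq_dec m (S n)) as [->|Hne]; [reflexivity|].
  simpl. rewrite (Hf n), IH by (lia || (intros; apply Hf; lia)). ring.
Qed.

Lemma sumR_single n i g : (i < n)%nat ->
  sumR n (fun k => if Nat.eq_dec k i then g k else 0) = g i.
Proof.
  induction n as [|n IH]; intros Hi; [lia|]. simpl.
  destruct (Nat.eq_dec n i) as [->|Hne].
  - rewrite (sumR_ext _ _ (fun _ => 0)), sumR_0; [ring|].
    intros k Hk. destruct (Nat.eq_dec k i); [lia|reflexivity].
  - rewrite IH by lia. ring.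
Qed.

(* [poly_eval d p t] is [polyR (S d) p t]; counting coefficients instead of the degree
   gives the zero polynomial a bound of its own, [polyR 0]. *)
Definition polyR (c : nat) (p : nat -> R) (t : R) : R := sumR c (fun k => p k * t ^ k).

Lemma polyR_0 c t : polyR c (fun _ => 0) t = 0.
Proof. unfold polyR. rewrite (sumR_ext _ _ (fun _ => 0)), sumR_0; [reflexivity|]. intros; ring. Qed.

Lemma polyR_plus c p q t : polyR c p t + polyR c q t = polyR c (fun k => p k + q k) t.
Proof. unfold polyR. rewrite <- sumR_plus. apply sumR_ext. intros; ring. Qed.

Lemma polyR_scal c s p t : s * polyR c p t = polyR c (fun k => s * p k) t.
Proof. unfold polyR. rewrite sumR_mult_l. apply sumR_ext. intros; ring. Qed.

Lemma polyR_widen c c' p t : (c <= c')%nat ->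
  polyR c p t = polyR c' (fun k => if Nat.ltb k c then p k else 0) t.
Proof.
  intros Hc. unfold polyR. rewrite (sumR_zero_tail c c').
  - apply sumR_ext. intros k Hk. destruct (Nat.ltb_spec k c); [reflexivity|lia].
  - exact Hc.
  - intros k Hk. destruct (Nat.ltb_spec k c); [lia|ring].
Qed.

Lemma polyR_mul_var c p t :
  t * polyR c p t = polyR (S c) (fun k => match k with O => 0 | S k => p k end) t.
Proof.
  unfold polyR. rewrite sumR_succ_l, Rmult_0_l, Rplus_0_l, sumR_mult_l.
  apply sumR_ext. intros; simpl; ring.
Qed.

Lemma polyR_monomial c m s t : (m < c)%nat ->
  s * t ^ m = polyR c (fun k => if Nat.eq_dec k m then s else 0) t.
Proof.
  intros Hm. unfold polyR.
  rewrite (sumR_ext _ _ (fun k => if Nat.eq_dec k m then s * t ^ k else 0)).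
  - now rewrite sumR_single.
  - intros k _. destruct (Nat.eq_dec k m); ring.
Qed.

Section SqrtForm.

Variables (D : R -> Prop) (b : list R).

Definition sqrt_form_eval (cS cT : nat) (p : nat -> nat -> R) (q : nat -> R) (r : R) : R :=
  sumR (length b) (fun j => polyR cS (p j) (r ^ 2) / sqrt (nth j b 0 ^ 2 - r ^ 2))
  + polyR cT q (r ^ 2).

Definition sqrt_form (cS cT : nat) (f : R -> R) : Prop :=
  exists p q, forall r, D r -> f r = sqrt_form_eval cS cT p q r.

Lemma sqrt_form_eval_poly cS cT q r :
  sqrt_form_eval cS cT (fun _ _ => 0) q r = polyR cT q (r ^ 2).
Proof.
  unfold sqrt_form_eval. rewrite (sumR_ext _ _ (fun _ => 0)), sumR_0; [ring|].
  intros j _. rewrite polyR_0. unfold Rdiv. ring.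
Qed.

Lemma sqrt_form_eval_plus cS cT p1 q1 p2 q2 r :
  sqrt_form_eval cS cT p1 q1 r + sqrt_form_eval cS cT p2 q2 r =
  sqrt_form_eval cS cT (fun j k => p1 j k + p2 j k) (fun k => q1 k + q2 k) r.
Proof.
  unfold sqrt_form_eval. rewrite <- polyR_plus. symmetry.
  rewrite (sumR_ext _ _ (fun j => polyR cS (p1 j) (r ^ 2) / sqrt (nth j b 0 ^ 2 - r ^ 2)
                                + polyR cS (p2 j) (r ^ 2) / sqrt (nth j b 0 ^ 2 - r ^ 2))).
  - rewrite sumR_plus. ring.
  - intros j _. rewrite <- polyR_plus. unfold Rdiv. ring.
Qed.

Lemma sqrt_form_eval_scal cS cT s p q r :
  s * sqrt_form_eval cS cT p q r =
  sqrt_form_eval cS cT (fun j k => s * p j k) (fun k => s * q k) r.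
Proof.
  unfold sqrt_form_eval. rewrite Rmult_plus_distr_l, sumR_mult_l, polyR_scal. f_equal.
  apply sumR_ext. intros j _. rewrite <- polyR_scal. unfold Rdiv. ring.
Qed.

Lemma sqrt_form_eval_mul_sqr cS cT p q r :
  r ^ 2 * sqrt_form_eval cS cT p q r =
  sqrt_form_eval (S cS) (S cT) (fun j k => match k with O => 0 | S k => p j k end)
                               (fun k => match k with O => 0 | S k => q k end) r.
Proof.
  unfold sqrt_form_eval. rewrite Rmult_plus_distr_l, sumR_mult_l, polyR_mul_var. f_equal.
  apply sumR_ext. intros j _. rewrite <- polyR_mul_var. unfold Rdiv. ring.
Qed.

Lemma sqrt_form_eval_widen cS cT cS' cT' p q r : (cS <= cS')%nat -> (cT <= cT')%nat ->
  sqrt_form_eval cS cT p q r =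
  sqrt_form_eval cS' cT' (fun j k => if Nat.ltb k cS then p j k else 0)
                         (fun k => if Nat.ltb k cT then q k else 0) r.
Proof.
  intros HS HT. unfold sqrt_form_eval. rewrite (polyR_widen cT cT') by exact HT. f_equal.
  apply sumR_ext. intros j _. now rewrite (polyR_widen cS cS').
Qed.

Lemma sqrt_form_ext cS cT f g :
  (forall r, D r -> f r = g r) -> sqrt_form cS cT g -> sqrt_form cS cT f.
Proof. intros Hfg [p [q Hg]]. exists p, q. intros r Hr. rewrite Hfg by exact Hr. now apply Hg. Qed.

Lemma sqrt_form_widen cS cT cS' cT' f : (cS <= cS')%nat -> (cT <= cT')%nat ->
  sqrt_form cS cT f -> sqrt_form cS' cT' f.
Proof.
  intros HS HT [p [q Hf]]. do 2 eexists. intros r Hr.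
  rewrite Hf by exact Hr. now apply sqrt_form_eval_widen.
Qed.

Lemma sqrt_form_0 cS cT : sqrt_form cS cT (fun _ => 0).
Proof.
  exists (fun _ _ => 0), (fun _ => 0). intros r _.
  now rewrite sqrt_form_eval_poly, polyR_0.
Qed.

Lemma sqrt_form_plus cS cT f g :
  sqrt_form cS cT f -> sqrt_form cS cT g -> sqrt_form cS cT (fun r => f r + g r).
Proof.
  intros [p1 [q1 Hf]] [p2 [q2 Hg]]. do 2 eexists. intros r Hr.
  rewrite Hf, Hg by exact Hr. apply sqrt_form_eval_plus.
Qed.

Lemma sqrt_form_scal cS cT s f : sqrt_form cS cT f -> sqrt_form cS cT (fun r => s * f r).
Proof.
  intros [p [q Hf]]. do 2 eexists. intros r Hr.
  rewrite Hf by exact Hr. apply sqrt_form_eval_scal.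
Qed.

Lemma sqrt_form_minus cS cT f g :
  sqrt_form cS cT f -> sqrt_form cS cT g -> sqrt_form cS cT (fun r => f r - g r).
Proof.
  intros Hf Hg. apply (sqrt_form_ext _ _ _ (fun r => f r + -1 * g r)); [intros; ring|].
  now apply sqrt_form_plus, sqrt_form_scal.
Qed.

Lemma sqrt_form_sumR cS cT n (f : nat -> R -> R) :
  (forall k, (k < n)%nat -> sqrt_form cS cT (f k)) ->
  sqrt_form cS cT (fun r => sumR n (fun k => f k r)).
Proof.
  induction n as [|n IH]; intros Hf; [apply sqrt_form_0|].
  apply sqrt_form_plus; [apply IH; intros|]; apply Hf; lia.
Qed.

Lemma sqrt_form_mul_sqr cS cT f :
  sqrt_form cS cT f -> sqrt_form (S cS) (S cT) (fun r => r ^ 2 * f r).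
Proof.
  intros [p [q Hf]]. do 2 eexists. intros r Hr.
  rewrite Hf by exact Hr. apply sqrt_form_eval_mul_sqr.
Qed.

Lemma sqrt_form_monomial cS cT m s : (m < cT)%nat ->
  sqrt_form cS cT (fun r => s * (r ^ 2) ^ m).
Proof.
  intros Hm. exists (fun _ _ => 0), (fun k => if Nat.eq_dec k m then s else 0). intros r _.
  rewrite sqrt_form_eval_poly. now apply polyR_monomial.
Qed.

Lemma sqrt_form_inv_sqrt cS cT j s : (0 < cS)%nat -> (j < length b)%nat ->
  sqrt_form cS cT (fun r => s / sqrt (nth j b 0 ^ 2 - r ^ 2)).
Proof.
  intros HS Hj.
  exists (fun i k => if Nat.eq_dec i j then if Nat.eq_dec k 0 then s else 0 else 0), (fun _ => 0).
  intros r _. unfold sqrt_form_eval. rewrite polyR_0, Rplus_0_r.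
  rewrite (sumR_ext _ _ (fun i => if Nat.eq_dec i j then s / sqrt (nth i b 0 ^ 2 - r ^ 2) else 0)).
  - now rewrite sumR_single.
  - intros i _. destruct (Nat.eq_dec i j).
    + rewrite <- polyR_monomial by exact HS. now rewrite pow_O, Rmult_1_r.
    + rewrite polyR_0. unfold Rdiv. ring.
Qed.

End SqrtForm.

Lemma continuous_Rmult (f g : R -> R) x :
  continuous f x -> continuous g x -> continuous (fun t => f t * g t) x.
Proof. apply (continuous_mult (K := R_AbsRing)). Qed.

Lemma continuous_Rplus (f g : R -> R) x :
  continuous f x -> continuous g x -> continuous (fun t => f t + g t) x.
Proof. apply (continuous_plus (V := R_NormedModule)). Qed.

Lemma continuous_Rminus (f g : R -> R) x :
  continuous f x -> continuous g x -> continuous (fun t => f t - g t) x.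
Proof. apply (continuous_minus (V := R_NormedModule)). Qed.

Lemma continuous_Rconst (c x : R) : continuous (fun _ : R => c) x.
Proof. apply continuous_const. Qed.

Lemma continuous_Rpow (f : R -> R) n x : continuous f x -> continuous (fun t => f t ^ n) x.
Proof. intros Hf. induction n; [apply continuous_Rconst | now apply continuous_Rmult]. Qed.

Lemma continuous_sumR n (f : nat -> R -> R) x : (forall k, (k < n)%nat -> continuous (f k) x) ->
  continuous (fun t => sumR n (fun k => f k t)) x.
Proof.
  induction n as [|n IH]; intros Hf; [apply continuous_Rconst|].
  apply continuous_Rplus; [apply IH; intros|]; apply Hf; lia.
Qed.

Lemma continuous_prodR l (g : R -> R -> R) x : (forall c, In c l -> continuous (g c) x) ->
  continuous (fun t => prodR l (fun c => g c t)) x.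
Proof.
  induction l as [|c l IH]; intros Hg; [apply continuous_Rconst|].
  apply continuous_Rmult.
  - apply Hg. now left.
  - apply IH. intros c' Hc'. apply Hg. now right.
Qed.

Ltac solve_continuous :=
  repeat match goal with
  | |- continuous (fun t => @?f t - @?g t) _ => apply (continuous_Rminus f g)
  | |- continuous (fun t => @?f t + @?g t) _ => apply (continuous_Rplus f g)
  | |- continuous (fun t => @?f t * @?g t) _ => apply (continuous_Rmult f g)
  | |- continuous (fun t => @?f t ^ _) _ => apply (continuous_Rpow f)
  | |- continuous (fun t => / @?f t) _ => apply (continuous_Rinv_comp f)
  | |- continuous (fun t => cos t) _ => apply continuous_cos
  | |- continuous (fun t => sin t) _ => apply continuous_sin
  | |- continuous (fun _ => _) _ => apply continuous_Rconst
  end.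

(* Equalities between [RInt]s are stated in the carrier of [R_CompleteNormedModule];
   [ring] and [field] only recognise them at type [R]. *)
Ltac R_eq := match goal with |- @eq _ ?x ?y => change (@eq R x y) end.

Lemma ex_RInt_continuous_R (f : R -> R) a b : (forall x, continuous f x) -> ex_RInt f a b.
Proof. intros Hf. apply (ex_RInt_continuous (V := R_CompleteNormedModule)). intros; apply Hf. Qed.

Lemma RInt_plus_R (f g : R -> R) a b : ex_RInt f a b -> ex_RInt g a b ->
  RInt (fun x => f x + g x) a b = RInt f a b + RInt g a b.
Proof. apply (RInt_plus (V := R_CompleteNormedModule)). Qed.

Lemma RInt_minus_R (f g : R -> R) a b : ex_RInt f a b -> ex_RInt g a b ->
  RInt (fun x => f x - g x) a b = RInt f a b - RInt g a b.
Proof. apply (RInt_minus (V := R_CompleteNormedModule)). Qed.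

Lemma RInt_scal_R (f : R -> R) a b c : ex_RInt f a b ->
  RInt (fun x => c * f x) a b = c * RInt f a b.
Proof. apply (RInt_scal (V := R_CompleteNormedModule)). Qed.

Lemma RInt_opp_R (f : R -> R) a b : ex_RInt f a b -> RInt (fun x => - f x) a b = - RInt f a b.
Proof. apply (RInt_opp (V := R_CompleteNormedModule)). Qed.

Lemma RInt_swap_R (f : R -> R) a b : ex_RInt f a b -> RInt f b a = - RInt f a b.
Proof. intros Hf. symmetry. apply (opp_RInt_swap (V := R_CompleteNormedModule) f a b Hf). Qed.

Lemma RInt_Chasles_R (f : R -> R) a b c : ex_RInt f a b -> ex_RInt f b c ->
  RInt f a b + RInt f b c = RInt f a c.
Proof. apply (RInt_Chasles (V := R_CompleteNormedModule)). Qed.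

Lemma RInt_sumR n (f : nat -> R -> R) a b : (forall k x, (k < n)%nat -> continuous (f k) x) ->
  RInt (fun x => sumR n (fun k => f k x)) a b = sumR n (fun k => RInt (f k) a b).
Proof.
  induction n as [|n IH]; intros Hf; simpl.
  - rewrite (RInt_const (V := R_CompleteNormedModule)). apply Rmult_0_r.
  - rewrite RInt_plus_R.
    + rewrite IH; [reflexivity|]. intros k x Hk. apply Hf. lia.
    + apply ex_RInt_continuous_R. intros x. apply continuous_sumR. intros k Hk. apply Hf. lia.
    + apply ex_RInt_continuous_R. intros x. apply Hf. lia.
Qed.

Lemma RInt_0_2PI_odd_reflection (f : R -> R) : (forall x, continuous f x) ->
  (forall y, f (2 * PI - y) = - f y) -> RInt f 0 (2 * PI) = 0.
Proof.
  intros Hc Hf.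
  assert (Hswap : RInt f 0 (2 * PI) = RInt f (2 * PI) 0).
  { pose proof (RInt_comp_lin (V := R_CompleteNormedModule) f (-1) (2 * PI) 0 (2 * PI)) as Hsub.
    replace (-1 * 0 + 2 * PI) with (2 * PI) in Hsub by ring.
    replace (-1 * (2 * PI) + 2 * PI) with 0 in Hsub by ring.
    rewrite <- Hsub by (apply ex_RInt_continuous_R; exact Hc).
    apply RInt_ext. intros x _. cbn. unfold mult; cbn.
    replace (-1 * x + 2 * PI) with (2 * PI - x) by ring. rewrite Hf. ring. }
  rewrite (RInt_swap_R f 0 (2 * PI)) in Hswap by (apply ex_RInt_continuous_R; exact Hc). lra.
Qed.

Lemma RInt_0_2PI_antiperiodic (f : R -> R) : (forall x, continuous f x) ->
  (forall y, f (y + PI) = - f y) -> RInt f 0 (2 * PI) = 0.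
Proof.
  intros Hc Hf.
  assert (Hshift : RInt f PI (2 * PI) = - RInt f 0 PI).
  { pose proof (RInt_comp_lin (V := R_CompleteNormedModule) f 1 PI 0 PI) as Hsub.
    replace (1 * 0 + PI) with PI in Hsub by ring.
    replace (1 * PI + PI) with (2 * PI) in Hsub by ring.
    rewrite <- Hsub, <- RInt_opp_R by (apply ex_RInt_continuous_R; exact Hc).
    apply RInt_ext. intros x _. cbn. unfold mult; cbn.
    now rewrite !Rmult_1_l, Hf. }
  rewrite <- RInt_Chasles_R with (b := PI) by (apply ex_RInt_continuous_R; exact Hc). lra.
Qed.

Lemma Rabs_mult_cos_lt B A th : Rabs B < A -> Rabs (B * cos th) < A.
Proof.
  intros HB. rewrite Rabs_mult. pose proof (COS_bound th).
  assert (Rabs (cos th) <= 1) by (apply Rabs_le; lra).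
  pose proof (Rabs_pos B). pose proof (Rabs_pos (cos th)). nra.
Qed.

(* [atan (be sin t / (1 - be cos t))] is, up to sign, the argument of [1 - be e^{it}]; since
   [|be| < 1] it is continuous in [t], unlike the primitive given by [tan (t/2)].  The value
   [be] is the root of modulus [< 1] of [B X^2 - 2 A X + B]. *)
Lemma is_derive_inv_affine_cos_primitive A B th : Rabs B < A ->
  let s := sqrt (A ^ 2 - B ^ 2) in
  let be := B / (A + s) in
  is_derive (fun t => (t + 2 * atan (be * sin t / (1 - be * cos t))) / s) th
            (/ (A - B * cos th)).
Proof.
  intros HB s be.
  assert (HB2 : B ^ 2 < A ^ 2).
  { rewrite <- (pow2_abs B). pose proof (Rabs_pos B). nra. }
  assert (Hss : s * s = A ^ 2 - B ^ 2) by (apply sqrt_sqrt; lra).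
  assert (Hs : 0 < s) by (apply sqrt_lt_R0; lra).
  assert (HA : 0 < A) by (pose proof (Rabs_pos B); lra).
  assert (Hbe : Rabs be < 1).
  { unfold be. rewrite Rabs_div, (Rabs_right (A + s)) by lra.
    apply (Rmult_lt_reg_r (A + s)); [lra|]. unfold Rdiv.
    rewrite Rmult_assoc, Rinv_l by lra. lra. }
  assert (Hbe2 : be ^ 2 < 1).
  { rewrite <- (pow2_abs be). pose proof (Rabs_pos be). nra. }
  assert (Hden : 0 < 1 - be * cos th).
  { pose proof (Rabs_mult_cos_lt be 1 th Hbe) as H. apply Rabs_def2 in H. lra. }
  assert (Hfactor : (1 - be ^ 2) * (A - B * cos th) = s * (1 + be ^ 2 - 2 * be * cos th)).
  { unfold be. field_simplify_eq; [|lra].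
    replace (B ^ 3) with (B * B ^ 2) by ring. replace (B ^ 2) with (A ^ 2 - s * s) by lra. ring. }
  assert (Hpos : 0 < 1 + be ^ 2 - 2 * be * cos th).
  { pose proof (COS_bound th).
    assert (0 <= be ^ 2 * (1 - cos th ^ 2)) by (apply Rmult_le_pos; nra). nra. }
  assert (HAB : A - B * cos th <> 0) by (intro E; rewrite E in Hfactor; nra).
  assert (Hsc : sin th ^ 2 = 1 - cos th ^ 2) by (rewrite <- (sin2_cos2 th); unfold Rsqr; ring).
  auto_derive.
  - lra.
  - field_simplify_eq; [|repeat split; lra || nra].
    rewrite Hsc. transitivity ((1 - be ^ 2) * (A - B * cos th)); [ring|]. rewrite Hfactor. ring.
Qed.

Lemma RInt_inv_affine_cos A B : Rabs B < A ->
  RInt (fun th => / (A - B * cos th)) 0 (2 * PI) = 2 * PI / sqrt (A ^ 2 - B ^ 2).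
Proof.
  intros HB. apply (is_RInt_unique (V := R_CompleteNormedModule)).
  set (s := sqrt (A ^ 2 - B ^ 2)). set (be := B / (A + s)).
  set (G := fun t => (t + 2 * atan (be * sin t / (1 - be * cos t))) / s).
  replace (2 * PI / s) with (minus (G (2 * PI)) (G 0)).
  - apply (is_RInt_derive (V := R_CompleteNormedModule) G).
    + intros th _. now apply is_derive_inv_affine_cos_primitive.
    + intros th _. solve_continuous.
      pose proof (Rabs_mult_cos_lt B A th HB) as H. apply Rabs_def2 in H. lra.
  - unfold G, minus, plus, opp; cbn. rewrite sin_2PI, sin_0, !Rmult_0_r.
    unfold Rdiv. rewrite !Rmult_0_l, atan_0. ring.
Qed.

Lemma RInt_inv_rcos_sub r c : Rabs r < Rabs c ->
  RInt (fun th => / (r * cos th - c)) 0 (2 * PI) = - sign c * (2 * PI) / sqrt (c ^ 2 - r ^ 2).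
Proof.
  intros Hrc. destruct (Rlt_or_le 0 c) as [Hc|Hc].
  - rewrite (Rabs_right c) in Hrc by lra.
    rewrite (RInt_ext _ (fun th => - / (c - r * cos th))).
    + rewrite RInt_opp_R.
      * rewrite RInt_inv_affine_cos, sign_eq_1 by lra. unfold Rdiv. R_eq. ring.
      * apply ex_RInt_continuous_R. intros th. solve_continuous.
        pose proof (Rabs_mult_cos_lt r c th Hrc) as H. apply Rabs_def2 in H. lra.
    + intros th _. pose proof (Rabs_mult_cos_lt r c th Hrc) as H. apply Rabs_def2 in H.
      R_eq. field. lra.
  - assert (Hc' : c < 0).
    { destruct Hc as [Hc | Hc0]; [exact Hc|].
      rewrite Hc0, Rabs_R0 in Hrc. pose proof (Rabs_pos r). lra. }
    rewrite (Rabs_left c) in Hrc by lra.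
    rewrite (RInt_ext _ (fun th => / (- c - - r * cos th))) by (intros; f_equal; ring).
    rewrite RInt_inv_affine_cos, sign_eq_m1 by (rewrite ?Rabs_Ropp; lra).
    replace ((- c) ^ 2 - (- r) ^ 2) with (c ^ 2 - r ^ 2) by ring. unfold Rdiv. R_eq. ring.
Qed.

Lemma partial_fractions_inv (a : list R) : a <> nil -> NoDup a ->
  exists be : nat -> R, forall x, ~ In x a ->
    / prodR a (fun c => x - c) = sumR (length a) (fun j => be j / (x - nth j a 0)).
Proof.
  induction a as [|b a IH]; intros Hnil Hnd; [congruence|].
  apply NoDup_cons_iff in Hnd as [Hb Hnd].
  destruct a as [|c a'].
  - exists (fun _ => 1). intros x Hx. simpl. field. intro E. apply Hx. left. lra.
  - destruct (IH ltac:(congruence) Hnd) as [be Hbe].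
    set (a := c :: a') in *. clearbody a.
    exists (fun j => match j with
                | O => sumR (length a) (fun i => be i / (b - nth i a 0))
                | S i => - (be i / (b - nth i a 0))
                end).
    intros x Hx. cbn [length prodR]. rewrite sumR_succ_l. cbn [nth].
    rewrite Rinv_mult, Hbe by (intro; apply Hx; now right).
    rewrite sumR_mult_l, sumR_div_r, <- sumR_plus. apply sumR_ext. intros j Hj.
    assert (Hin : In (nth j a 0) a) by (now apply nth_In).
    assert (Hxb : x - b <> 0) by (intro E; apply Hx; left; lra).
    assert (Hbj : b - nth j a 0 <> 0)
      by (intro E; apply Hb; replace b with (nth j a 0) by lra; exact Hin).
    assert (Hxj : x - nth j a 0 <> 0)
      by (intro E; apply Hx; right; replace x with (nth j a 0) by lra; exact Hin).
    field. auto.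
Qed.

Lemma partial_fractions_pow (a : list R) u : a <> nil -> NoDup a ->
  exists h be : nat -> R, forall x, ~ In x a ->
    x ^ u / prodR a (fun c => x - c) =
    sumR u (fun k => h k * x ^ k) + sumR (length a) (fun j => be j / (x - nth j a 0)).
Proof.
  intros Hnil Hnd. induction u as [|u [h [be Hpf]]].
  - destruct (partial_fractions_inv a Hnil Hnd) as [be Hbe].
    exists (fun _ => 0), be. intros x Hx. rewrite <- Hbe by exact Hx. simpl. unfold Rdiv. ring.
  - exists (fun k => match k with O => sumR (length a) be | S k => h k end),
           (fun j => be j * nth j a 0).
    intros x Hx. rewrite sumR_succ_l.
    replace (x ^ S u / prodR a (fun c => x - c)) with (x * (x ^ u / prodR a (fun c => x - c)))
      by (simpl; unfold Rdiv; ring).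
    rewrite Hpf by exact Hx. rewrite Rmult_plus_distr_l, !sumR_mult_l.
    rewrite (sumR_ext (length a) _ (fun j => be j + be j * nth j a 0 / (x - nth j a 0))).
    + rewrite sumR_plus. rewrite (sumR_ext u _ (fun k => h k * x ^ S k)) by (intros; simpl; ring).
      ring.
    + intros j Hj. assert (x - nth j a 0 <> 0).
      { intro E. apply Hx. replace x with (nth j a 0) by lra. now apply nth_In. }
      field. assumption.
Qed.

Definition small_radius (a : list R) (r : R) : Prop :=
  0 < r /\ forall c, In c a -> r < Rabs c.

Lemma small_radius_rcos_notin a r th : small_radius a r -> ~ In (r * cos th) a.
Proof.
  intros [Hr Ha] Hin. specialize (Ha _ Hin).
  rewrite Rabs_mult, (Rabs_right r) in Ha by lra.
  pose proof (COS_bound th). assert (Rabs (cos th) <= 1) by (apply Rabs_le; lra). nra.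
Qed.

Lemma In_abs_values a c : In c a ->
  exists j, (j < length (abs_values a))%nat /\ nth j (abs_values a) 0 = Rabs c.
Proof.
  intros Hc. assert (Habs : In (Rabs c) (abs_values a)).
  { apply nodup_In, in_map, Hc. }
  apply In_nth with (d := 0) in Habs as [j [Hj Hjc]]. now exists j.
Qed.

Lemma prodR_neq_0 l g : (forall c, In c l -> g c <> 0) -> prodR l g <> 0.
Proof.
  induction l as [|c l IH]; intros Hg; simpl; [lra|].
  apply Rmult_integral_contrapositive_currified; [apply Hg; now left|].
  apply IH. intros c' Hc'. apply Hg. now right.
Qed.

Definition moment_integrand (a : list R) (u v : nat) (r th : R) : R :=
  (r * cos th) ^ u * (r * sin th) ^ v / prodR a (fun c => r * cos th - c).

Definition moment (a : list R) (u v : nat) (r : R) : R :=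
  RInt (moment_integrand a u v r) 0 (2 * PI).

Lemma continuous_moment_integrand a u v r th : small_radius a r ->
  continuous (moment_integrand a u v r) th.
Proof.
  intros Hr. unfold moment_integrand, Rdiv. apply continuous_Rmult; [solve_continuous|].
  apply continuous_Rinv_comp.
  - apply continuous_prodR. intros c _. solve_continuous.
  - apply prodR_neq_0. intros c Hc E. apply (small_radius_rcos_notin a r th Hr).
    replace (r * cos th) with c by lra. exact Hc.
Qed.

Lemma ex_RInt_moment_integrand a u v r : small_radius a r ->
  ex_RInt (moment_integrand a u v r) 0 (2 * PI).
Proof. intros Hr. apply ex_RInt_continuous_R. intros; now apply continuous_moment_integrand. Qed.

Lemma pow_opp_odd x v : Nat.Odd v -> (- x) ^ v = - x ^ v.
Proof.
  intros [k ->]. replace (2 * k + 1)%nat with (S (2 * k)) by lia.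
  rewrite <- (Rmult_1_l x) at 1. rewrite Ropp_mult_distr_l, Rpow_mult_distr, pow_1_odd. ring.
Qed.

Lemma moment_odd a u v r : small_radius a r -> Nat.Odd v -> moment a u v r = 0.
Proof.
  intros Hr Hv. apply RInt_0_2PI_odd_reflection.
  - intros; now apply continuous_moment_integrand.
  - intros y. unfold moment_integrand.
    rewrite cos_minus, sin_minus, cos_2PI, sin_2PI.
    replace (r * (1 * cos y + 0 * sin y)) with (r * cos y) by ring.
    replace (r * (0 * cos y - 1 * sin y)) with (- (r * sin y)) by ring.
    rewrite pow_opp_odd by exact Hv. unfold Rdiv. ring.
Qed.

Lemma moment_add2 a u v r : small_radius a r ->
  moment a u (v + 2) r = r ^ 2 * moment a u v r - moment a (u + 2) v r.
Proof.
  intros Hr. unfold moment. rewrite <- RInt_scal_R, <- RInt_minus_R.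
  - apply RInt_ext. intros th _. unfold moment_integrand. rewrite !pow_add.
    replace ((r * sin th) ^ 2) with (r ^ 2 - (r * cos th) ^ 2).
    + unfold Rdiv. R_eq. ring.
    + rewrite <- (Rmult_1_r (r ^ 2)) at 1. rewrite <- (sin2_cos2 th). unfold Rsqr. ring.
  - apply ex_RInt_continuous_R. intros th. apply continuous_Rmult; [apply continuous_Rconst|].
    now apply continuous_moment_integrand.
  - now apply ex_RInt_moment_integrand.
  - now apply ex_RInt_moment_integrand.
Qed.

Lemma sqrt_form_RInt_rcos_pow D b cS cT w : (w / 2 < cT)%nat ->
  sqrt_form D b cS cT (fun r => RInt (fun th => (r * cos th) ^ w) 0 (2 * PI)).
Proof.
  intros Hw. destruct (Nat.Even_or_Odd w) as [[m ->]|Hodd].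
  - rewrite Nat.mul_comm, Nat.div_mul in Hw by lia.
    apply (sqrt_form_ext _ _ _ _ _
             (fun r => RInt (fun th => cos th ^ (2 * m)) 0 (2 * PI) * (r ^ 2) ^ m)).
    + intros r _. rewrite (Rmult_comm (RInt _ _ _)), <- RInt_scal_R.
      * apply RInt_ext. intros th _. rewrite Rpow_mult_distr, (pow_mult r). R_eq. ring.
      * apply ex_RInt_continuous_R. intros th. solve_continuous.
    + now apply sqrt_form_monomial.
  - apply (sqrt_form_ext _ _ _ _ _ (fun _ => 0)); [|apply sqrt_form_0].
    intros r _. apply RInt_0_2PI_antiperiodic.
    + intros th. solve_continuous.
    + intros y. rewrite neg_cos. replace (r * - cos y) with (- (r * cos y)) by ring.
      now apply pow_opp_odd.
Qed.

Lemma moment_0_expand a u r h be : small_radius a r ->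
  (forall x, ~ In x a -> x ^ u / prodR a (fun c => x - c) =
     sumR u (fun k => h k * x ^ k) + sumR (length a) (fun j => be j / (x - nth j a 0))) ->
  moment a u 0 r =
    sumR u (fun k => h k * RInt (fun th => (r * cos th) ^ k) 0 (2 * PI))
    + sumR (length a) (fun j => be j * RInt (fun th => / (r * cos th - nth j a 0)) 0 (2 * PI)).
Proof.
  intros Hr Hpf.
  assert (Hpole : forall j th, (j < length a)%nat -> r * cos th - nth j a 0 <> 0).
  { intros j th Hj E. apply (small_radius_rcos_notin a r th Hr).
    replace (r * cos th) with (nth j a 0) by lra. now apply nth_In. }
  unfold moment. rewrite (RInt_ext _ (fun th =>
      sumR u (fun k => h k * (r * cos th) ^ k)
      + sumR (length a) (fun j => be j * / (r * cos th - nth j a 0)))).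
  - rewrite RInt_plus_R, (RInt_sumR u), (RInt_sumR (length a)).
    + f_equal; apply sumR_ext; intros k Hk; apply RInt_scal_R, ex_RInt_continuous_R;
        intros th; solve_continuous; now apply Hpole.
    + intros j th Hj. solve_continuous. now apply Hpole.
    + intros k th Hk. solve_continuous.
    + apply ex_RInt_continuous_R. intros th. apply continuous_sumR. intros k Hk. solve_continuous.
    + apply ex_RInt_continuous_R. intros th. apply continuous_sumR. intros j Hj.
      solve_continuous. now apply Hpole.
  - intros th _. unfold moment_integrand. rewrite pow_O, Rmult_1_r, Hpf.
    + reflexivity.
    + exact (small_radius_rcos_notin a r th Hr).
Qed.

Ltac div2_facts x :=
  pose proof (Nat.div_mod_eq x 2); pose proof (Nat.mod_upper_bound x 2 ltac:(lia)).

Lemma sqrt_form_moment_0 a u : a <> nil -> NoDup a ->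
  sqrt_form (small_radius a) (abs_values a) 1 ((u + 1) / 2) (moment a u 0).
Proof.
  intros Hnil Hnd. destruct (partial_fractions_pow a u Hnil Hnd) as [h [be Hpf]].
  eapply sqrt_form_ext; [intros r Hr; exact (moment_0_expand a u r h be Hr Hpf)|].
  apply sqrt_form_plus; apply sqrt_form_sumR.
  - intros k Hk. apply sqrt_form_scal, sqrt_form_RInt_rcos_pow.
    div2_facts k. div2_facts (u + 1)%nat. lia.
  - intros j Hj. apply sqrt_form_scal.
    assert (Hin : In (nth j a 0) a) by (now apply nth_In).
    destruct (In_abs_values a _ Hin) as [i [Hi Habs]].
    eapply sqrt_form_ext; [|apply (sqrt_form_inv_sqrt _ _ 1 _ i (- sign (nth j a 0) * (2 * PI)))];
      [|lia|exact Hi].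
    intros r [Hr0 Hra]. rewrite Habs, pow2_abs. apply RInt_inv_rcos_sub.
    rewrite (Rabs_right r) by lra. now apply Hra.
Qed.

Lemma sqrt_form_moment_even a m : a <> nil -> NoDup a -> forall u,
  sqrt_form (small_radius a) (abs_values a) (S m) ((u + 2 * m + 1) / 2) (moment a u (2 * m)).
Proof.
  intros Hnil Hnd. induction m as [|m IH]; intros u.
  - rewrite Nat.add_0_r. now apply sqrt_form_moment_0.
  - eapply sqrt_form_ext.
    { intros r Hr. replace (2 * S m)%nat with (2 * m + 2)%nat by lia. now apply moment_add2. }
    apply sqrt_form_minus.
    + eapply sqrt_form_widen; [| |apply sqrt_form_mul_sqr, IH]; [lia|].
      div2_facts (u + 2 * m + 1)%nat. div2_facts (u + 2 * S m + 1)%nat. lia.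
    + eapply sqrt_form_widen; [| |apply IH]; [lia|].
      div2_facts (u + 2 + 2 * m + 1)%nat. div2_facts (u + 2 * S m + 1)%nat. lia.
Qed.

Lemma sqrt_form_moment a n u v : a <> nil -> NoDup a -> (u + v <= n + 1)%nat ->
  sqrt_form (small_radius a) (abs_values a) (S ((n + 1) / 2)) (S (n / 2)) (moment a u v).
Proof.
  intros Hnil Hnd Huv. destruct (Nat.Even_or_Odd v) as [[m ->]|Hodd].
  - eapply sqrt_form_widen; [| |now apply sqrt_form_moment_even].
    + div2_facts (n + 1)%nat. lia.
    + div2_facts (u + 2 * m + 1)%nat. div2_facts n. lia.
  - eapply sqrt_form_ext; [|apply sqrt_form_0]. intros r Hr. now apply moment_odd.
Qed.

Lemma I_line_moments n P Q a r : small_radius a r ->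
  I_line n P Q a r = sumR (S n) (fun i => sumR (S (n - i)) (fun j =>
    - Q i j * moment a i (S j) r - P i j * moment a (S i) j r)).
Proof.
  intros Hr. unfold I_line.
  assert (Hc : forall u v th, continuous (moment_integrand a u v r) th)
    by (intros; now apply continuous_moment_integrand).
  rewrite (RInt_ext _ (fun th => sumR (S n) (fun i => sumR (S (n - i)) (fun j =>
      - Q i j * moment_integrand a i (S j) r th - P i j * moment_integrand a (S i) j r th)))).
  - rewrite RInt_sumR.
    + apply sumR_ext. intros i _. rewrite RInt_sumR.
      * apply sumR_ext. intros j _. unfold moment.
        rewrite RInt_minus_R, !RInt_scal_R; try reflexivity;
          apply ex_RInt_continuous_R; intros th; solve_continuous; apply Hc.
      * intros j th _. solve_continuous; apply Hc.
    + intros i th _. apply continuous_sumR. intros j _. solve_continuous; apply Hc.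
  - intros th _. unfold poly2_eval, Rdiv at 1. rewrite sumR_sub_mul.
    apply sumR_ext. intros i _. rewrite sumR_sub_mul.
    apply sumR_ext. intros j _. unfold moment_integrand. simpl pow. unfold Rdiv. R_eq. ring.
Qed.

Theorem proposition2p3 :
  forall (K n : nat) (P Q : nat -> nat -> R) (a : list R),
    (1 <= K)%nat -> length a = K -> NoDup a ->
    (forall aj, In aj a -> aj <> 0) ->
    exists (S : nat -> nat -> R) (T : nat -> R),
      forall r : R, 0 < r -> (forall aj, In aj a -> r < Rabs aj) ->
        I_line n P Q a r =
          sumR (length (abs_values a))
            (fun j => poly_eval ((n + 1) / 2) (S j) (r ^ 2)
                      / sqrt ((nth j (abs_values a) 0) ^ 2 - r ^ 2))
          + poly_eval (n / 2) T (r ^ 2).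
Proof.
  intros K n P Q a HK Hlen Hnd _.
  assert (Hnil : a <> nil) by (intros ->; simpl in Hlen; lia).
  assert (Hform : sqrt_form (small_radius a) (abs_values a)
                    (Datatypes.S ((n + 1) / 2)) (Datatypes.S (n / 2)) (I_line n P Q a)).
  { eapply sqrt_form_ext; [intros r Hr; now apply I_line_moments|].
    apply sqrt_form_sumR. intros i Hi. apply sqrt_form_sumR. intros j Hj.
    apply sqrt_form_minus; apply sqrt_form_scal, sqrt_form_moment; auto; lia. }
  destruct Hform as [p [q Hpq]]. exists p, q. intros r Hr Ha. now apply Hpq.
Qed.
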